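(* Any categorial sequential allocation mechanism with all agents optimistic has worst-case egalitarian rank equal to $n^p$ (the largest possible).
   Context: Basic categorized domain: $n$ agents, $p$ categories $D_i=\{1,\ldots,n\}$ of indivisible items, bundles $\mathfrak D=D_1\times\cdots\times D_p$; each agent $j$ has a linear order $R_j$ over $\mathfrak D$; a profile is $P_n=(R_1,\ldots,R_n)$. $\mathrm{Rank}(R,\vec d)$ is the position of $\vec d$ in $R$ (top $=1$, bottom $=n^p$). CSAM $f_\mathcal O$: given a linear order $\mathcal O$ over $\{1,\ldots,n\}\times\{1,\ldots,p\}$, in rounds $t=1,\ldots,np$, if the $t$-th element of $\mathcal O$ is $(j,i)$ then agent $j$ chooses an item $d_{j,i}$ from $D_{i,t}$, the items of $D_i$ not yet chosen at the start of round $t$. Agent $j$ receives $f^j_\mathcal O(P_n)=(d_{j,1},\ldots,d_{j,p})$. An optimistic agent $j$ choosing from $D_i$ in round $t$ picks the $i$-th component of her top-ranked bundle among available bundles, where a bundle is available to her if for each category $l$ from which she has already chosen its $l$-th component equals $d_{j,l}$, and for each other category $l$ its $l$-th component lies in $D_{l,t}$. Worst-case egalitarian rank: $\max_{P_n}\max_{j}\mathrm{Rank}(R_j,f^j_\mathcal O(P_n))$ over all profiles of $n$ agents. *)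

From mathcomp Require Import all_boot.
Set Implicit Arguments. Unset Strict Implicit. Unset Printing Implicit Defensive.

(* Agents, items of each category: 'I_n ; categories: 'I_p (0-indexed). *)
Definition bundle (n p : nat) := {ffun 'I_p -> 'I_n}.

(* A preference R over bundles, read as: R b d = "b is ranked at or above d". *)
Definition pref (n p : nat) := {ffun bundle n p -> {ffun bundle n p -> bool}}.

Definition lin_orderb (T : finType) (R : {ffun T -> {ffun T -> bool}}) : bool :=
  [&& [forall x, R x x],
      [forall x, forall y, (R x y && R y x) ==> (x == y)],
      [forall x, forall y, forall z, (R x y && R y z) ==> R x z] &
      [forall x, forall y, R x y || R y x]].

Definition Rank (n p : nat) (R : pref n p) (d : bundle n p) : nat :=
  #|[set b | R b d]|.

Definition profile (n p : nat) := {ffun 'I_n -> pref n p}.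

Definition is_profile (n p : nat) (P : profile n p) : bool :=
  [forall j, lin_orderb (P j)].

(* Partial allocation: A j i = Some d if agent j has already chosen d from D_i. *)
Definition alloc (n p : nat) := 'I_n -> 'I_p -> option 'I_n.

Definition avail_item (n p : nat) (A : alloc n p) (i : 'I_p) (d : 'I_n) : bool :=
  [forall k, A k i != Some d].

Definition avail_bundle (n p : nat) (A : alloc n p) (j : 'I_n) (b : bundle n p) : bool :=
  [forall l, if A j l is Some d then b l == d else avail_item A l (b l)].

(* optimistic choice of agent j from category i: the i-th component of her
   top-ranked available bundle (the fallback j is unreachable for linear orders) *)
Definition opt_choice (n p : nat) (R : pref n p) (A : alloc n p) (j : 'I_n) (i : 'I_p)
  : 'I_n :=
  match [pick b | avail_bundle A j b && [forall b', avail_bundle A j b' ==> R b b']] with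
  | Some b => b i
  | None => j
  end.

Definition step (n p : nat) (P : profile n p) (A : alloc n p) (ji : 'I_n * 'I_p)
  : alloc n p :=
  fun j' i' => if (j' == ji.1) && (i' == ji.2)
               then Some (opt_choice (P ji.1) A ji.1 ji.2) else A j' i'.

(* CSAM f_O with all agents optimistic; O listed as the sequence of its
   elements in order (t-th element = t-th round). *)
Definition csam (n p : nat) (O : seq ('I_n * 'I_p)) (P : profile n p) (j : 'I_n)
  : bundle n p :=
  [ffun i => odflt j (foldl (step P) (fun _ _ => None) O j i)].

Definition wc_egal_rank (n p : nat) (O : seq ('I_n * 'I_p)) : nat :=
  \max_(P : profile n p | is_profile P) \max_(j < n) Rank (P j) (csam O P j).

From mathcomp Require Import all_boot.
Set Implicit Arguments. Unset Strict Implicit. Unset Printing Implicit Defensive.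

(* A profile of linear orders can make the optimistic agent [star] end up with
   her worst bundle, the constant bundle [z], whenever [star] is never blocked:
   each time she picks in a category [c], either all other agents have already
   picked [c], or she still has to pick in a later category [m] in which some
   other agent has not picked yet.  The other agents rank bundles by their
   number of components different from [z], so they never take [z] while
   another item is left.  Agent [star] ranks the constant bundle [z] last and,
   above it, prefers the bundles differing from it in a single category [m],
   the more the later her turn in [m].  Picking in [c], she thus aims at a
   bundle of that shape in her later category [m] and takes [z] in [c]; if
   everybody else has already picked [c], [z] is the only item left.
   An unblocked agent exists: for a blocked pair [(j, l)] of maximal turn,
   some agent [k] picks [l] after [j], and the category in which [k] is
   blocked would force [j] to pick [l] earlier than she does. *)

Section UnblockedAgent.
Variables (I C : finType) (t : I * C -> nat).
Hypothesis t_inj : injective t.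

Definition blocked (x : I * C) : bool :=
  [exists k, (k != x.1) && (t x <= t (k, x.2))] &&
  [forall m, (t x < t (x.1, m)) ==> [forall k, (k != x.1) ==> (t (k, m) < t x)]].

Lemma exists_unblocked_agent (i0 : I) : exists j, forall l, ~~ blocked (j, l).
Proof.
suff /existsP[j /forallP unblocked] : [exists j, [forall l, ~~ blocked (j, l)]].
  by exists j.
apply: contraT; rewrite negb_exists => /forallP all_blocked.
have blocked_of j : exists l, blocked (j, l).
  by have /forallPn[l /negPn] := all_blocked j; exists l.
have [l0 blocked0] := blocked_of i0.
case: (arg_maxnP t blocked0) => -[j l] /andP[/existsP[k /andP[/= kj jl_le_kl]] _] jl_max.
have jl_lt_kl : t (j, l) < t (k, l).
  by rewrite ltn_neqAle jl_le_kl (inj_eq t_inj) xpair_eqE eqxx !andbT eq_sym.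
have [l' kl'_blocked] := blocked_of k.
have kl'_le_jl : t (k, l') <= t (j, l) := jl_max _ kl'_blocked.
move: kl'_blocked => /andP[_ /forallP/(_ l)].
rewrite (leq_ltn_trans kl'_le_jl jl_lt_kl) => /forallP/(_ j).
by rewrite eq_sym kj => /leq_trans/(_ kl'_le_jl); rewrite ltnn.
Qed.

Lemma unblocked_cases (x : I * C) : ~~ blocked x ->
  (forall k, k != x.1 -> t (k, x.2) < t x) \/
  exists m k, [/\ t x < t (x.1, m), k != x.1 & t x <= t (k, m)].
Proof.
rewrite negb_and => /orP[/existsPn last | /forallPn[m]].
  by left => k kx; have := last k; rewrite kx ltnNge.
rewrite negb_imply => /andP[xm /forallPn[k]]; rewrite negb_imply -leqNgt.
by case/andP => kx xkm; right; exists m, k.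
Qed.

End UnblockedAgent.

Lemma card_bundle n p : #|{: bundle n p}| = n ^ p.
Proof. by rewrite card_ffun !card_ord. Qed.

Lemma Rank_le n p (R : pref n p) d : Rank R d <= n ^ p.
Proof. by rewrite -card_bundle max_card. Qed.

Section ScorePreference.
Variables (n p : nat) (f : bundle n p -> nat).

Definition score_key (b : bundle n p) := f b * #|{: bundle n p}| + enum_rank b.

Definition score_pref : pref n p :=
  [ffun b => [ffun d => score_key d <= score_key b]].

Lemma score_key_inj : injective score_key.
Proof.
move=> b b' /(congr1 (modn^~ #|{: bundle n p}|)).
by rewrite !modnMDl !modn_small // => /ord_inj/enum_rank_inj.
Qed.

Lemma score_key_lt b b' : f b < f b' -> score_key b < score_key b'.
Proof.
move=> lt_bb'; apply: (@leq_trans ((f b).+1 * #|{: bundle n p}|)).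
  by rewrite /score_key mulSn addnC ltn_add2r ltn_ord.
by rewrite /score_key (leq_trans _ (leq_addr _ _)) // leq_mul2r lt_bb' orbT.
Qed.

Lemma score_pref_lin : lin_orderb score_pref.
Proof.
apply/and4P; split; do ![apply/forallP => ?]; rewrite ?ffunE //.
- by rewrite -eqn_leq (inj_eq score_key_inj) eq_sym implybb.
- by apply/implyP => /andP[le_yx le_zy]; apply: leq_trans le_zy le_yx.
- exact: leq_total.
Qed.

Lemma opt_choice_score_pref A j i : (exists b0, avail_bundle A j b0) ->
  exists2 b, avail_bundle A j b &
    (forall b', avail_bundle A j b' -> f b' <= f b) /\
    opt_choice score_pref A j i = b i.
Proof.
case=> b0 /(arg_maxnP score_key) [bmax bmax_avail bmax_max].
rewrite /opt_choice; case: pickP => [b /andP[b_avail /forallP b_top] | none].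
  exists b => //; split=> // b' b'_avail; rewrite leqNgt; apply/negP.
  by move/score_key_lt; have := implyP (b_top b') b'_avail; rewrite !ffunE leqNgt => /negP.
have := none bmax; rewrite bmax_avail /=; move/forallP; case=> b'.
by apply/implyP => b'_avail; rewrite !ffunE; apply: bmax_max.
Qed.

Lemma Rank_score_pref_min b : (forall b', b' != b -> f b < f b') ->
  Rank score_pref b = n ^ p.
Proof.
move=> b_min; rewrite -card_bundle /Rank -cardsT; apply: eq_card => b'; rewrite !inE !ffunE.
have [-> | b'b] := eqVneq b' b; first exact: leqnn.
by rewrite ltnW // score_key_lt // b_min.
Qed.

End ScorePreference.

Section Simulation.
Variables (n p : nat) (O : seq ('I_n * 'I_p)).
Hypothesis O_perm : perm_eq O (enum {: 'I_n * 'I_p}).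
Variable score : 'I_n -> bundle n p -> nat.

Definition turn (x : 'I_n * 'I_p) := index x O.

Lemma mem_order x : x \in O.
Proof. by rewrite (perm_mem O_perm) mem_enum. Qed.

Lemma turn_lt_size x : turn x < size O.
Proof. by rewrite index_mem mem_order. Qed.

Lemma nth_turn x0 x : nth x0 O (turn x) = x.
Proof. exact/nth_index/mem_order. Qed.

Lemma turn_inj : injective turn.
Proof. by move=> x y txy; rewrite -(nth_turn x x) txy nth_turn. Qed.

Lemma turn_ind (Q : 'I_n * 'I_p -> Prop) :
  (forall x, (forall y, turn y < turn x -> Q y) -> Q x) -> forall x, Q x.
Proof.
move=> Q_turn x; suff Q_at u : forall x, turn x = u -> Q x by exact: Q_at.
elim/ltn_ind: u => u IH {}x tx; apply: Q_turn => y.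
by rewrite tx => /IH/(_ y erefl).
Qed.

Definition score_profile : profile n p := [ffun j => score_pref (score j)].

Lemma score_profile_is_profile : is_profile score_profile.
Proof. by apply/forallP => j; rewrite ffunE score_pref_lin. Qed.

Definition alloc_at t : alloc n p :=
  foldl (step score_profile) (fun _ _ => None) (take t O).

Definition choice (x : 'I_n * 'I_p) : 'I_n :=
  opt_choice (score_pref (score x.1)) (alloc_at (turn x)) x.1 x.2.

Lemma alloc_atE t k c : t <= size O ->
  alloc_at t k c = if turn (k, c) < t then Some (choice (k, c)) else None.
Proof.
elim: t => [|t IH] t_le; first by rewrite /alloc_at take0 ltn0.
rewrite /alloc_at (take_nth (k, c) t_le) foldl_rcons -/(alloc_at t) /step (IH (ltnW t_le)).
have turn_nth : turn (nth (k, c) O t) = t.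
  by rewrite /turn index_uniq // (perm_uniq O_perm) enum_uniq.
have -> : (k == (nth (k, c) O t).1) && (c == (nth (k, c) O t).2) = (turn (k, c) == t).
  rewrite -[in RHS]turn_nth (inj_eq turn_inj).
  by case: (nth (k, c) O t) {turn_nth} => a b; rewrite xpair_eqE.
rewrite ltnS [turn _ <= t]leq_eqVlt; have [tkc|_] := eqVneq (turn (k, c)) t; last by [].
by rewrite -tkc nth_turn ffunE.
Qed.

Lemma csam_score_profile j : csam O score_profile j = [ffun c => choice (j, c)].
Proof.
apply/ffunP => c; rewrite !ffunE.
by have := alloc_atE j c (leqnn (size O)); rewrite /alloc_at take_size turn_lt_size => ->.
Qed.

Lemma avail_item_alloc_at u c d : u <= size O ->
  avail_item (alloc_at u) c d = [forall k, (turn (k, c) < u) ==> (choice (k, c) != d)].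
Proof.
by move=> u_le; apply: eq_forallb => k; rewrite alloc_atE //; case: (_ < u).
Qed.

Lemma avail_bundle_alloc_at u j (b : bundle n p) : u <= size O ->
  (forall l, turn (j, l) < u -> b l = choice (j, l)) ->
  (forall l, u <= turn (j, l) -> avail_item (alloc_at u) l (b l)) ->
  avail_bundle (alloc_at u) j b.
Proof.
move=> u_le chosen free; apply/forallP => l; rewrite alloc_atE //.
by case: ltnP => [/chosen -> | /free].
Qed.

Definition legal_choice x := avail_item (alloc_at (turn x)) x.2 (choice x).

Section BeforeTurn.
Variable u : nat.
Hypotheses (u_le : u <= size O) (legal_before : forall y, turn y < u -> legal_choice y).

Lemma card_avail_item c :
  #|[set d | avail_item (alloc_at u) c d]| = #|[set k | u <= turn (k, c)]|.
Proof.
pose S := [set k | turn (k, c) < u].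
have choice_neq k1 k2 : turn (k1, c) < turn (k2, c) < u -> choice (k1, c) != choice (k2, c).
  case/andP=> lt12 lt2u; move: (legal_before lt2u).
  rewrite /legal_choice avail_item_alloc_at ?(ltnW (turn_lt_size _)) //.
  by move=> /forallP/(_ k1); rewrite lt12.
have choice_inj : {in S &, injective (fun k => choice (k, c))}.
  move=> k1 k2; rewrite !inE => lt1 lt2 /eqP; apply: contraTeq => k12.
  have : turn (k1, c) != turn (k2, c) by rewrite (inj_eq turn_inj) xpair_eqE eqxx andbT.
  rewrite neq_ltn => /orP[lt|lt]; last rewrite eq_sym; apply: choice_neq; rewrite lt //.
have -> : [set d | avail_item (alloc_at u) c d] = ~: [set choice (k, c) | k in S].
  apply/setP => d; rewrite !inE avail_item_alloc_at //.
  apply/forallP/negP => [all_neq /imsetP[k] | not_chosen k].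
    by rewrite inE => ltku d_ch; have := all_neq k; rewrite ltku d_ch eqxx.
  apply/implyP => ltku; apply/eqP => chd; apply: not_chosen.
  by apply/imsetP; exists k; rewrite ?inE.
have -> : [set k | u <= turn (k, c)] = ~: S by apply/setP => k; rewrite !inE -leqNgt.
by rewrite cardsCs setCK card_in_imset // [RHS]cardsCs setCK.
Qed.

Lemma exists_avail_item k c : u <= turn (k, c) -> exists d, avail_item (alloc_at u) c d.
Proof.
move=> free_k; have : 0 < #|[set d | avail_item (alloc_at u) c d]|.
  by rewrite card_avail_item; apply/card_gt0P; exists k; rewrite inE.
by case/card_gt0P => d; rewrite inE; exists d.
Qed.

Lemma exists_avail_bundle j : exists b, avail_bundle (alloc_at u) j b.
Proof.
pose pick_free l := odflt j [pick d | avail_item (alloc_at u) l d].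
exists [ffun l => if turn (j, l) < u then choice (j, l) else pick_free l].
apply: avail_bundle_alloc_at => // l; rewrite ffunE; first by move->.
move=> free_l; rewrite ltnNge free_l /pick_free; case: pickP => // none.
by have [d] := exists_avail_item free_l; rewrite none.
Qed.

Lemma choice_max x : turn x = u ->
  exists2 b, avail_bundle (alloc_at u) x.1 b &
    (forall b', avail_bundle (alloc_at u) x.1 b' -> score x.1 b' <= score x.1 b) /\
    choice x = b x.2.
Proof.
rewrite /choice => ->; apply: opt_choice_score_pref; exact: exists_avail_bundle.
Qed.

End BeforeTurn.

Lemma avail_bundle_own x b : avail_bundle (alloc_at (turn x)) x.1 b ->
  avail_item (alloc_at (turn x)) x.2 (b x.2).
Proof.
case: x => k c /forallP/(_ c); rewrite alloc_atE ?ltnn //.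
exact: ltnW (turn_lt_size _).
Qed.

Lemma legal_choiceP x : legal_choice x.
Proof.
elim/turn_ind: x => x legal_before.
have [b b_avail [_ choice_b]] :=
  choice_max (ltnW (turn_lt_size x)) legal_before (erefl (turn x)).
by rewrite /legal_choice choice_b; apply: avail_bundle_own.
Qed.

End Simulation.

Section TrapProfile.
Variables (n p : nat) (O : seq ('I_n * 'I_p)).
Hypothesis O_perm : perm_eq O (enum {: 'I_n * 'I_p}).
Variables (z star : 'I_n).
Hypothesis star_unblocked : forall c, ~~ blocked (turn O) (star, c).

Definition support (b : bundle n p) := [set c | b c != z].

Definition star_score (b : bundle n p) : nat :=
  if [pick c | support b == [set c]] is Some c then (turn O (star, c)).+2
  else support b != set0.

Definition trap_score (j : 'I_n) (b : bundle n p) : nat :=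
  if j == star then star_score b else #|support b|.

Local Notation alloc_at := (alloc_at O trap_score).
Local Notation choice := (choice O trap_score).

Lemma star_score_le (b : bundle n p) c : b c != z -> star_score b <= (turn O (star, c)).+2.
Proof.
move=> bc; rewrite /star_score; case: pickP => [c0 /eqP supp | _]; last by case: (_ != _).
have : c \in support b by rewrite inE.
by rewrite supp inE => /eqP ->.
Qed.

Definition spike (m : 'I_p) (y : 'I_n) : bundle n p := [ffun l => if l == m then y else z].

Lemma star_score_spike m y : y != z -> star_score (spike m y) = (turn O (star, m)).+2.
Proof.
move=> yz; rewrite /star_score.
have -> : support (spike m y) = [set m].
  by apply/setP => c; rewrite !inE ffunE; case: (c == m); rewrite ?eqxx.
by case: pickP => [c /eqP/set1_inj -> | /(_ m)]; rewrite ?eqxx.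
Qed.

Lemma star_score_pos (b : bundle n p) : b != [ffun => z] -> 0 < star_score b.
Proof.
move=> bz; have supp_nz : support b != set0.
  apply: contraNneq bz => supp0; apply/eqP/ffunP => c; rewrite ffunE.
  have : c \notin support b by rewrite supp0 in_set0.
  by rewrite inE negbK => /eqP.
by rewrite /star_score; case: pickP => // _; rewrite supp_nz.
Qed.

Lemma star_score_const : star_score [ffun => z] = 0.
Proof.
have supp0 : support [ffun => z] = set0 by apply/setP => c; rewrite !inE ffunE eqxx.
rewrite /star_score supp0 eqxx; case: pickP => // c /eqP/setP/(_ c).
by rewrite !inE eqxx.
Qed.

Section ChoiceInduction.
Variable x : 'I_n * 'I_p.
Let u := turn O x.
Hypothesis z_iff_star_before :
  forall y, turn O y < u -> (choice y == z) = (y.1 == star).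

Let u_le : u <= size O := ltnW (turn_lt_size O_perm x).

Lemma avail_z c : u <= turn O (star, c) -> avail_item (alloc_at u) c z.
Proof.
move=> free_star; rewrite avail_item_alloc_at //; apply/forallP => k; apply/implyP => ltku.
by rewrite z_iff_star_before //=; apply: contraTneq ltku => ->; rewrite -leqNgt.
Qed.

Let legal_before y (_ : turn O y < u) := legal_choiceP O_perm trap_score y.

Lemma choice_star_before c : turn O (star, c) < u -> choice (star, c) = z.
Proof. by move=> star_done; apply/eqP; rewrite z_iff_star_before. Qed.

Lemma exists_avail_nonz k c : k != star -> u <= turn O (k, c) ->
  exists2 y, y != z & avail_item (alloc_at u) c y.
Proof.
move=> k_star free_k; have [star_done | free_star] := ltnP (turn O (star, c)) u.
  have [y y_avail] := exists_avail_item O_perm u_le legal_before free_k.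
  exists y => //; move: y_avail; rewrite avail_item_alloc_at // => /forallP/(_ star).
  by rewrite star_done choice_star_before // eq_sym.
have : 1 < #|[set d | avail_item (alloc_at u) c d]|.
  rewrite (card_avail_item O_perm u_le legal_before); apply/card_gt1P.
  by exists k, star; rewrite !inE free_k free_star.
case/card_gt1P => d1 [d2 []]; rewrite !inE => d1_avail d2_avail d12.
have [d1z|d1z] := eqVneq d1 z; last by exists d1.
by exists d2; rewrite // -d1z eq_sym.
Qed.

Lemma avail_spike m y : u < turn O (star, m) -> avail_item (alloc_at u) m y ->
  avail_bundle (alloc_at u) star (spike m y).
Proof.
move=> star_waits y_avail; apply: avail_bundle_alloc_at => // l; rewrite ffunE.
  move=> star_done; rewrite choice_star_before //; case: eqP => // lm.
  by move: star_done; rewrite lm ltnNge ltnW.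
by case: eqP => [-> | _ free_star] //; apply: avail_z.
Qed.

Lemma choice_star_z : x.1 = star -> choice x = z.
Proof.
move=> x_star; have tx : turn O (star, x.2) = u by rewrite -x_star -surjective_pairing.
have [b b_avail [b_max ->]] := choice_max O_perm u_le legal_before (erefl u).
have bc_avail := avail_bundle_own O_perm b_avail.
rewrite /trap_score x_star eqxx in b_max; rewrite x_star in b_avail.
apply/eqP; apply: contraT => bc_nz.
case: (unblocked_cases (star_unblocked x.2)) => /=; rewrite tx.
  move=> star_last; have : #|[set d | avail_item (alloc_at u) x.2 d]| <= 1.
    rewrite (card_avail_item O_perm u_le legal_before) -(cards1 star).
    apply/subset_leq_card/subsetP => k; rewrite !inE; apply: contraTT => k_star.
    by rewrite -ltnNge star_last.
  move/card_le1_eqP/(_ (b x.2) z); rewrite !inE bc_avail avail_z ?tx //.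
  by move=> /(_ isT isT) bcz; rewrite bcz eqxx in bc_nz.
case=> m [k [star_waits k_star free_k]].
have [y yz y_avail] := exists_avail_nonz k_star free_k.
have := b_max _ (avail_spike star_waits y_avail).
rewrite star_score_spike // leqNgt ltnS (leq_trans (star_score_le bc_nz)) //.
by rewrite tx.
Qed.

Lemma choice_other_nz : x.1 != star -> choice x != z.
Proof.
move=> x_star; have [b b_avail [b_max ->]] := choice_max O_perm u_le legal_before (erefl u).
rewrite /trap_score (negbTE x_star) in b_max; apply/negP => /eqP bcz.
have [y yz y_avail] := exists_avail_nonz x_star (leqnn _).
pose b' := [ffun l => if l == x.2 then y else b l].
have b'_avail : avail_bundle (alloc_at u) x.1 b'.
  apply/forallP => l; rewrite ffunE; have [-> | _] := eqVneq l x.2.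
    by rewrite alloc_atE // -surjective_pairing ltnn.
  exact: forallP b_avail l.
have := b_max _ b'_avail; apply/negP; rewrite -ltnNge.
have -> : support b' = x.2 |: support b.
  by apply/setP => l; rewrite !inE ffunE; have [-> | //] := eqVneq l x.2; rewrite yz.
by rewrite cardsU1 inE bcz eqxx.
Qed.

End ChoiceInduction.

Lemma choice_z_iff x : (choice x == z) = (x.1 == star).
Proof.
elim/(@turn_ind _ _ O): x => x IH; have [x_star | x_star] := eqVneq x.1 star.
  by rewrite choice_star_z ?eqxx.
by rewrite (negbTE (choice_other_nz IH x_star)).
Qed.

Lemma csam_trap_star : csam O (score_profile trap_score) star = [ffun => z].
Proof.
rewrite (csam_score_profile O_perm); apply/ffunP => c; rewrite !ffunE.
by apply/eqP; rewrite choice_z_iff eqxx.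
Qed.

Lemma Rank_trap_star : Rank (score_profile trap_score star) [ffun => z] = n ^ p.
Proof.
rewrite ffunE; apply: Rank_score_pref_min => b bz.
by rewrite /trap_score eqxx star_score_const star_score_pos.
Qed.

End TrapProfile.

Theorem proposition3 (n p : nat) (O : seq ('I_n * 'I_p)) :
  0 < n ->
  perm_eq O (enum {: 'I_n * 'I_p}) ->
  wc_egal_rank O = n ^ p.
Proof.
move=> n_gt0 O_perm; apply/eqP; rewrite eqn_leq; apply/andP; split.
  by apply/bigmax_leqP => P _; apply/bigmax_leqP => j _; apply: Rank_le.
pose z := Ordinal n_gt0.
have [star star_unblocked] := exists_unblocked_agent (turn_inj O_perm) z.
pose trap := score_profile (trap_score O z star).
apply: leq_trans (leq_bigmax_cond _ (score_profile_is_profile _)) => /=.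
apply: leq_trans (leq_bigmax (F := fun j => Rank (trap j) (csam O trap j)) star) => /=.
by rewrite (csam_trap_star O_perm z star_unblocked) Rank_trap_star.
Qed.
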